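(* Let $K,M,N_c,N_g$ be positive integers with $N_g\le N_c$, let $\rho_{tr}>0$, and for each $k\in\{0,\dots,K-1\}$ let $\boldsymbol{\Omega}_k\in\mathbb{R}^{M\times N_g}$ have non-negative entries, let $\phi_k\in\{0,\dots,N_c-1\}$, and let $\varrho_k(\cdot)$ be a real-valued function on the integers. Define $\bar{\boldsymbol{\Omega}}_{k}=[\boldsymbol{\Omega}_k\ \ \mathbf{0}_{M\times(N_c-N_g)}]$ and $\boldsymbol{\Omega}_{k'}^{\phi_{k'}-\phi_k}=\bar{\boldsymbol{\Omega}}_{k'}\boldsymbol{\Pi}_{N_c}^{\phi_{k'}-\phi_k}\mathbf{I}_{N_c\times N_g}$. For each integer $\Delta_\ell$ define the sum mean square error of channel prediction $$\epsilon^{CP}(\Delta_\ell)=\sum_{k=0}^{K-1}\sum_{i=0}^{M-1}\sum_{j=0}^{N_g-1}\left\{[\boldsymbol{\Omega}_k]_{i,j}-\varrho_k^2(\Delta_\ell)\frac{[\boldsymbol{\Omega}_k]_{i,j}^2}{\sum_{k'=0}^{K-1}[\boldsymbol{\Omega}_{k'}^{\phi_{k'}-\phi_k}]_{i,j}+\frac1{\rho_{tr}}}\right\}.$$ Then for every $\Delta_\ell$, $$\epsilon^{CP}(\Delta_\ell)\ge\varepsilon^{CP}(\Delta_\ell)=\sum_{k=0}^{K-1}\sum_{i=0}^{M-1}\sum_{j=0}^{N_g-1}\left\{[\boldsymbol{\Omega}_k]_{i,j}-\varrho_k^2(\Delta_\ell)\frac{[\boldsymbol{\Omega}_k]_{i,j}^2}{[\boldsymbol{\Omega}_k]_{i,j}+\frac1{\rho_{tr}}}\right\},$$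 and equality holds if, for all $k\neq k'$, $\left(\bar{\boldsymbol{\Omega}}_{k}\boldsymbol{\Pi}_{N_c}^{\phi_k}\right)\odot\left(\bar{\boldsymbol{\Omega}}_{k'}\boldsymbol{\Pi}_{N_c}^{\phi_{k'}}\right)=\mathbf{0}$.
   Context: Indices start at $0$. $\langle n\rangle_N$ denotes $n$ modulo $N$. $\boldsymbol{\Pi}_N^{n}=\begin{bmatrix}\mathbf{0}&\mathbf{I}_{N-\langle n\rangle_N}\\ \mathbf{I}_{\langle n\rangle_N}&\mathbf{0}\end{bmatrix}$; $\mathbf{I}_{N\times G}$ is the first $G$ columns of $\mathbf{I}_N$; $\odot$ is the Hadamard product. Interpretation: $\boldsymbol{\Omega}_k$ is the angle-delay channel power matrix of user $k$, $\phi_k$ its pilot phase shift, $\rho_{tr}$ the pilot SNR, $\varrho_k$ the channel temporal correlation function (in the paper $\varrho_k(\Delta)=J_0(2\pi\nu_kT_{sym}\Delta)$), and $\epsilon^{CP}(\Delta_\ell)$ the sum MSE of MMSE prediction of the channel $\Delta_\ell$ symbols after the pilot symbol. *)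

From HB Require Import structures.
From mathcomp Require Import all_boot all_order all_algebra.
Set Implicit Arguments. Unset Strict Implicit. Unset Printing Implicit Defensive.
Import Order.TTheory GRing.Theory Num.Theory.
Local Open Scope ring_scope.

(* Cyclic shift (permutation) matrix Pi_N^n =
     [ 0          I_{N-<n>_N} ]
     [ I_{<n>_N}  0           ]
   Entry (a,b) is 1 iff b = (a + <n>_N) mod N (indices from 0). *)
Definition Pi_mx (R : nzRingType) (N : nat) (n : int) : 'M[R]_N :=
  \matrix_(a < N, b < N)
     (((b : nat) == ((a + `|(n %% (N : int))%Z|%N) %% N)%N)%:R).

Definition Icols (R : nzRingType) (N G : nat) : 'M[R]_(N, G) :=
  \matrix_(a < N, b < G) (((a : nat) == (b : nat))%:R).

Definition pad_mx (R : nzRingType) (M Ng Nc : nat) (h : (Ng <= Nc)%N)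
  (A : 'M[R]_(M, Ng)) : 'M[R]_(M, Nc) :=
  castmx (erefl M, subnKC h) (row_mx A (0 : 'M[R]_(M, Nc - Ng))).

Definition hadamard (R : nzRingType) (m n : nat) (A B : 'M[R]_(m, n)) : 'M[R]_(m, n) :=
  map2_mx *%R A B.

Definition Omega_shift (R : nzRingType) (K M Ng Nc : nat) (h : (Ng <= Nc)%N)
  (Omega : 'I_K -> 'M[R]_(M, Ng)) (phi : 'I_K -> 'I_Nc) (k' k : 'I_K)
  : 'M[R]_(M, Ng) :=
  pad_mx h (Omega k') *m Pi_mx R Nc ((phi k' : int) - (phi k : int)) *m Icols R Nc Ng.

Definition eps_CP (R : realFieldType) (K M Ng Nc : nat) (h : (Ng <= Nc)%N)
  (rho_tr : R) (Omega : 'I_K -> 'M[R]_(M, Ng)) (phi : 'I_K -> 'I_Nc)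
  (varrho : 'I_K -> int -> R) (Delta : int) : R :=
  \sum_(k < K) \sum_(i < M) \sum_(j < Ng)
    (Omega k i j - (varrho k Delta) ^+ 2 * ((Omega k i j) ^+ 2 /
       (\sum_(k' < K) Omega_shift h Omega phi k' k i j + rho_tr^-1))).

Definition veps_CP (R : realFieldType) (K M Ng : nat)
  (rho_tr : R) (Omega : 'I_K -> 'M[R]_(M, Ng))
  (varrho : 'I_K -> int -> R) (Delta : int) : R :=
  \sum_(k < K) \sum_(i < M) \sum_(j < Ng)
    (Omega k i j - (varrho k Delta) ^+ 2 * ((Omega k i j) ^+ 2 /
       (Omega k i j + rho_tr^-1))).

(* The self term k' = k of the interference sum is [Omega_k]_{i,j} itself and the
   other terms are non-negative; since x - r^2 x^2/(y + c) increases with y, each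
   summand of eps^CP dominates the corresponding summand of the bound.
   Pi^z is the permutation matrix of the cyclic shift by z, so Pi^a Pi^b = Pi^(a+b),
   and a common column permutation commutes with the Hadamard product.  Multiplying
   the disjointness condition by Pi^(-phi_k) thus gives
   Omegabar_k (.) (Omegabar_k' Pi^(phi_k' - phi_k)) = 0: every cross term vanishes
   where [Omega_k]_{i,j} <> 0, and where it is 0 both summands reduce to 0. *)

From HB Require Import structures.
From mathcomp Require Import all_boot all_order all_algebra all_fingroup.
Set Implicit Arguments. Unset Strict Implicit. Unset Printing Implicit Defensive.
Import Order.TTheory GRing.Theory Num.Theory.
Local Open Scope ring_scope.

Lemma abs_modz (z : int) (N : nat) : (0 < N)%N -> (`|(z %% N)%Z|%N : int) = (z %% N)%Z.
Proof. by move=> N_gt0; rewrite gez0_abs // modz_ge0 // eqz_nat -lt0n. Qed.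

Section CyclicShift.
Variable n : nat.
Local Notation N := n.+1.

Definition shift_perm (z : int) : {perm 'I_N} :=
  perm (@addIr _ (inZp `|(z %% N)%Z|%N : 'I_N)).

Lemma shift_permE z (a : 'I_N) :
  val (shift_perm z a) = ((a + `|(z %% N)%Z|) %% N)%N.
Proof. by rewrite permE /= modnDmr. Qed.

Lemma shift_permD z1 z2 : (shift_perm z1 * shift_perm z2)%g = shift_perm (z1 + z2).
Proof.
apply/permP => a; apply/val_inj; rewrite permM !shift_permE modnDml.
apply/eqP; rewrite -eqz_nat -!modz_nat !PoszD !abs_modz //.
by apply/eqP; rewrite -addrA -[LHS](modzDmr a) modzDm.
Qed.

Lemma shift_perm0 : shift_perm 0 = 1%g.
Proof. by apply/permP => a; apply/val_inj; rewrite perm1 shift_permE mod0z addn0 modn_small. Qed.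

Variable R : nzRingType.

Lemma Pi_mx_perm z : Pi_mx R N z = perm_mx (shift_perm z).
Proof. by apply/matrixP => a b; rewrite !mxE eq_sym -shift_permE. Qed.

Lemma Pi_mxD z1 z2 : Pi_mx R N z1 *m Pi_mx R N z2 = Pi_mx R N (z1 + z2).
Proof. by rewrite !Pi_mx_perm -perm_mxM shift_permD. Qed.

Lemma Pi_mx0 : Pi_mx R N 0 = 1%:M.
Proof. by rewrite Pi_mx_perm shift_perm0 perm_mx1. Qed.

End CyclicShift.

Lemma mulmx_perm_mxE (R : nzRingType) m n (A : 'M[R]_(m, n)) (s : {perm 'I_n}) i j :
  (A *m perm_mx s) i j = A i (s^-1%g j).
Proof. by rewrite -[s]invgK -col_permE invgK mxE. Qed.

Lemma hadamard_mulmx_perm (R : nzRingType) m n (A B : 'M[R]_(m, n)) (s : {perm 'I_n}) :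
  hadamard (A *m perm_mx s) (B *m perm_mx s) = hadamard A B *m perm_mx s.
Proof. by apply/matrixP => i j; rewrite /hadamard mxE !mulmx_perm_mxE mxE. Qed.

Lemma mulmx_IcolsE (R : nzRingType) m N G (h : (G <= N)%N) (A : 'M[R]_(m, N)) i j :
  (A *m Icols R N G) i j = A i (widen_ord h j).
Proof.
rewrite mxE (bigD1 (widen_ord h j)) //= big1 => [|a a_neq].
  by rewrite mxE eqxx mulr1 addr0.
have a_neq_j : (a : nat) != j by apply: contra a_neq => /eqP a_j; apply/eqP/val_inj.
by rewrite mxE (negbTE a_neq_j) mulr0.
Qed.

Lemma pad_mx_widen (R : nzRingType) M Ng Nc (h : (Ng <= Nc)%N) (A : 'M[R]_(M, Ng)) i j :
  pad_mx h A i (widen_ord h j) = A i j.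
Proof.
rewrite /pad_mx castmxE cast_ord_id.
have -> : cast_ord (esym (subnKC h)) (widen_ord h j) = lshift (Nc - Ng) j by exact: val_inj.
by rewrite row_mxEl.
Qed.

Lemma pad_mx_ge0 (R : numDomainType) M Ng Nc (h : (Ng <= Nc)%N) (A : 'M[R]_(M, Ng)) i b :
  (forall i j, 0 <= A i j) -> 0 <= pad_mx h A i b.
Proof.
move=> A_ge0; rewrite /pad_mx castmxE cast_ord_id -[cast_ord _ b]splitK.
by case: split => c; rewrite ?row_mxEl ?row_mxEr ?mxE.
Qed.

Lemma ler_sub_sqr_div (R : realFieldType) (r x y c : R) :
  0 <= x -> x <= y -> 0 < c ->
  x - r ^+ 2 * (x ^+ 2 / (x + c)) <= x - r ^+ 2 * (x ^+ 2 / (y + c)).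
Proof.
move=> x_ge0 x_le_y c_gt0; have y_ge0 := le_trans x_ge0 x_le_y.
rewrite lerB // ler_wpM2l ?sqr_ge0 // ler_wpM2l ?exprn_ge0 //.
by rewrite lef_pV2 ?posrE ?lerD2r // ltr_wpDl.
Qed.

Section ShiftedPowerMatrix.
Variables (R : numDomainType) (K M n Ng : nat) (hNg : (Ng <= n.+1)%N).
Variables (Omega : 'I_K -> 'M[R]_(M, Ng)) (phi : 'I_K -> 'I_n.+1).
Hypothesis Omega_ge0 : forall k i j, 0 <= Omega k i j.

Local Notation Omegabar k := (pad_mx hNg (Omega k)).
Local Notation Omega_sh := (Omega_shift hNg Omega phi).

Lemma Omega_shiftE k' k i j :
  Omega_sh k' k i j =
  Omegabar k' i ((shift_perm n ((phi k' : int) - (phi k : int)))^-1%g (widen_ord hNg j)).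
Proof. by rewrite /Omega_shift (mulmx_IcolsE hNg) Pi_mx_perm mulmx_perm_mxE. Qed.

Lemma Omega_shift_ge0 k' k i j : 0 <= Omega_sh k' k i j.
Proof. by rewrite Omega_shiftE pad_mx_ge0. Qed.

Lemma Omega_shift_diag k i j : Omega_sh k k i j = Omega k i j.
Proof. by rewrite /Omega_shift subrr Pi_mx0 mulmx1 (mulmx_IcolsE hNg) pad_mx_widen. Qed.

Lemma le_Omega_sum_shift k i j : Omega k i j <= \sum_(k' < K) Omega_sh k' k i j.
Proof.
rewrite (bigD1 k) //= Omega_shift_diag lerDl.
by apply: sumr_ge0 => k' _; apply: Omega_shift_ge0.
Qed.

Lemma Omega_shift_disjoint k k' i j :
  hadamard (Omegabar k *m Pi_mx R n.+1 (phi k))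
           (Omegabar k' *m Pi_mx R n.+1 (phi k')) = 0 ->
  Omega k i j * Omega_sh k' k i j = 0.
Proof.
rewrite /Omega_shift (mulmx_IcolsE hNg).
move=> /(congr1 (mulmx^~ (Pi_mx R n.+1 (- (phi k : int))))).
rewrite /= mul0mx [Pi_mx _ _ (- _)]Pi_mx_perm -hadamard_mulmx_perm -!Pi_mx_perm -!mulmxA !Pi_mxD.
rewrite subrr Pi_mx0 mulmx1 => /matrixP/(_ i (widen_ord hNg j)).
by rewrite /hadamard mxE pad_mx_widen => ->; rewrite mxE.
Qed.

Lemma sum_Omega_shift_disjoint k i j :
  (forall k', k != k' ->
     hadamard (Omegabar k *m Pi_mx R n.+1 (phi k))
              (Omegabar k' *m Pi_mx R n.+1 (phi k')) = 0) ->
  Omega k i j != 0 -> \sum_(k' < K) Omega_sh k' k i j = Omega k i j.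
Proof.
move=> disjoint Omega_neq0; rewrite (bigD1 k) //= Omega_shift_diag big1 ?addr0 // => k' k'_neq.
have k_neq : k != k' by rewrite eq_sym.
have /eqP := Omega_shift_disjoint i j (disjoint k' k_neq).
by rewrite mulf_eq0 (negbTE Omega_neq0) => /eqP.
Qed.

End ShiftedPowerMatrix.

Theorem proposition4 (R : realFieldType) (K M Nc Ng : nat)
  (hK : (0 < K)%N) (hM : (0 < M)%N) (hNc : (0 < Nc)%N) (hNg0 : (0 < Ng)%N)
  (hNg : (Ng <= Nc)%N) (rho_tr : R) (hrho : 0 < rho_tr)
  (Omega : 'I_K -> 'M[R]_(M, Ng))
  (hOmega : forall k i j, 0 <= Omega k i j)
  (phi : 'I_K -> 'I_Nc) (varrho : 'I_K -> int -> R) :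
  (forall Delta : int,
     veps_CP rho_tr Omega varrho Delta <= eps_CP hNg rho_tr Omega phi varrho Delta) /\
  ((forall k k' : 'I_K, k != k' ->
      hadamard (pad_mx hNg (Omega k) *m Pi_mx R Nc (phi k : int))
               (pad_mx hNg (Omega k') *m Pi_mx R Nc (phi k' : int)) = 0) ->
   forall Delta : int,
     eps_CP hNg rho_tr Omega phi varrho Delta = veps_CP rho_tr Omega varrho Delta).
Proof.
case: Nc hNc hNg phi => // n _ hNg phi.
have rho_inv_gt0 : 0 < rho_tr^-1 by rewrite invr_gt0.
split=> [Delta | disjoint Delta]; rewrite /veps_CP /eps_CP.
  apply: ler_sum => k _; apply: ler_sum => i _; apply: ler_sum => j _.
  exact: ler_sub_sqr_div (le_Omega_sum_shift hNg phi hOmega k i j) rho_inv_gt0.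
apply: eq_bigr => k _; apply: eq_bigr => i _; apply: eq_bigr => j _.
have [->|Omega_neq0] := eqVneq (Omega k i j) 0; first by rewrite expr0n !mul0r.
by rewrite sum_Omega_shift_disjoint //; apply: disjoint.
Qed.
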